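(* Let $N\ge2$, $M\ge1$, $k\ge0$ and let $\psi\in\mathcal H_M$. Then the operators $\mathcal T^k(|\psi\rangle\langle\psi|)$ on $\mathcal H_{M+k}$ and $\mathcal W_k(|\psi\rangle\langle\psi|)$ on $\mathcal H_k$ have the same nonzero eigenvalues, counted with multiplicity.
   Context: For $n\ge0$, $\mathcal H_n=P_n(\mathbb C^N)^{\otimes n}$ is the totally symmetric subspace ($P_n$ the symmetrizing projection, $\mathcal H_0=\mathbb C$). On the bosonic Fock space $\bigoplus_{n}\mathcal H_n$, $a^*(v)\phi=\sqrt{n+1}P_{n+1}(v\otimes\phi)$ for $\phi\in\mathcal H_n$, $a(v)=a^*(v)^*$; with an orthonormal basis $e_1,\dots,e_N$ of $\mathbb C^N$, $a_i=a(e_i)$. $\mathcal T^k(\Gamma)=\frac{(M+k)!}{M!}P_{M+k}(I_{\mathbb C^N}^{\otimes k}\otimes\Gamma)P_{M+k}$ for operators $\Gamma=P_M\Gamma P_M$ on $\mathcal H_M$. $\mathcal W_k(\Gamma)=\frac1{k!}\sum_{i_1,\dots,i_k}\sum_{j_1,\dots,j_k}\mathrm{Tr}_{\mathcal H_M}(\Gamma\,a_{i_1}\cdots a_{i_k}a^*_{j_k}\cdots a^*_{j_1})\,a^*_{i_1}\cdots a^*_{i_k}a_{j_k}\cdots a_{j_1}$ restricted to $\mathcal H_k$. *)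

(* Complex scalars: an arbitrary numClosedFieldType C
   (algebraically closed field with conjugation and order, e.g. algC; C is the
   abstract stand-in for the complex numbers). *)
From HB Require Import structures.
From mathcomp Require Import all_boot all_order all_algebra all_fingroup.
Set Implicit Arguments. Unset Strict Implicit. Unset Printing Implicit Defensive.
Import Order.TTheory GRing.Theory Num.Theory.
Local Open Scope ring_scope.

Section Fock.
Variable C : numClosedFieldType.
Variable N : nat.

(* Basis of (C^N)^{(x) n}: e_{t_1} (x) ... (x) e_{t_n}, t : n.-tuple 'I_N. *)
Definition tdim (n : nat) : nat := #|{: n.-tuple 'I_N}|.
Definition idx (n : nat) (i : 'I_(tdim n)) : n.-tuple 'I_N := enum_val i.
Definition ridx (n : nat) (t : n.-tuple 'I_N) : 'I_(tdim n) := enum_rank t.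

Definition adjmx (m n : nat) (A : 'M[C]_(m, n)) : 'M[C]_(n, m) :=
  (map_mx Num.conj A)^T.

Definition ket (i : 'I_N) : 'cV[C]_N := delta_mx i 0.

(* the symmetrizing projection P_n = (1/n!) sum_{sigma in S_n} U_sigma *)
Definition Psym (n : nat) : 'M[C]_(tdim n) :=
  \matrix_(i, j)
    ((n`!)%:R^-1 *
     (#|[set s : 'S_n | [tuple tnth (idx j) (s k) | k < n] == idx i]|)%:R).

(* the operator phi |-> v (x) phi from (C^N)^{(x) n} to (C^N)^{(x) n+1} *)
Definition tensmx (n : nat) (v : 'cV[C]_N) : 'M[C]_(tdim n.+1, tdim n) :=
  \matrix_(i, j) (v (thead (idx i)) 0 * (behead_tuple (idx i) == idx j)%:R).

(* creation operator a^*(v) : H_n -> H_{n+1},  a^*(v) phi = sqrt(n+1) P_{n+1}(v (x) phi),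
   extended by 0 on the orthogonal complement of H_n *)
Definition adag (n : nat) (v : 'cV[C]_N) : 'M[C]_(tdim n.+1, tdim n) :=
  sqrtC (n.+1)%:R *: (Psym n.+1 *m tensmx n v *m Psym n).

Definition annih (n : nat) (v : 'cV[C]_N) : 'M[C]_(tdim n, tdim n.+1) :=
  adjmx (adag n v).

(* creas M vs k = a^*(vs (k-1)) ... a^*(vs 1) a^*(vs 0) : H_M -> H_{k+M} *)
Fixpoint creas (M : nat) (vs : nat -> 'cV[C]_N) (k : nat)
  : 'M[C]_(tdim (k + M), tdim M) :=
  match k with
  | 0 => 1%:M
  | k'.+1 => adag (k' + M) (vs k') *m creas M vs k'
  end.

Definition kets (k : nat) (t : k.-tuple 'I_N) : nat -> 'cV[C]_N :=
  fun n => nth 0 (map ket t) n.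
Definition rkets (k : nat) (t : k.-tuple 'I_N) : nat -> 'cV[C]_N :=
  fun n => nth 0 (rev (map ket t)) n.

(* a^*_{j_k} ... a^*_{j_1} : H_M -> H_{k+M} *)
Definition crea_prod (M k : nat) (j : k.-tuple 'I_N) : 'M[C]_(tdim (k + M), tdim M) :=
  creas M (kets j) k.
(* a^*_{i_1} ... a^*_{i_k} : H_M -> H_{k+M} *)
Definition crea_prod_rev (M k : nat) (i : k.-tuple 'I_N) : 'M[C]_(tdim (k + M), tdim M) :=
  creas M (rkets i) k.

(* I^{(x) 1} (x) A *)
Definition idop (n : nat) (A : 'M[C]_(tdim n)) : 'M[C]_(tdim n.+1) :=
  \matrix_(i, j) ((thead (idx i) == thead (idx j))%:R *
                  A (ridx (behead_tuple (idx i))) (ridx (behead_tuple (idx j)))).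

Fixpoint idk (M : nat) (k : nat) (A : 'M[C]_(tdim M)) : 'M[C]_(tdim (k + M)) :=
  match k with
  | 0 => A
  | k'.+1 => idop (idk k' A)
  end.

Definition Tk (M k : nat) (G : 'M[C]_(tdim M)) : 'M[C]_(tdim (k + M)) :=
  ((k + M)`!)%:R / (M`!)%:R *: (Psym (k + M) *m idk k G *m Psym (k + M)).

Definition Wk (M k : nat) (G : 'M[C]_(tdim M)) : 'M[C]_(tdim (k + 0)) :=
  (k`!)%:R^-1 *:
  \sum_(i : k.-tuple 'I_N) \sum_(j : k.-tuple 'I_N)
     (\tr (G *m (adjmx (crea_prod_rev M i) *m crea_prod M j)) *:
      (crea_prod_rev 0 i *m adjmx (crea_prod_rev 0 j))).

(* Matrix (in the basis given by the rows of row_base P) of the restriction of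
   the operator A (acting on column vectors) to the subspace
   H = range of P (P self-adjoint, so range P = row space of P). *)
Definition restr (n : nat) (P A : 'M[C]_n) : 'M[C]_(\rank P) :=
  row_base P *m A^T *m pinvmx (row_base P).

Definition eigmult (n : nat) (A : 'M[C]_(tdim n)) (lambda : C) : nat :=
  mup lambda (char_poly (restr (Psym n) A)).

End Fock.

Arguments Tk {C N} M k G.
Arguments Wk {C N} M k G.
Arguments eigmult {C N} n A lambda.
Arguments Psym {C} N n.
Arguments adjmx {C m n} A.

(* Let [E] be the operator [phi |-> phi (x) psi] from [(C^N)^{(x) k}] to
   [(C^N)^{(x) k+M}], and let [P], [Q] be the symmetrizers on [k + M] and [k]
   factors.  Then [I^{(x) k} (x) |psi><psi| = E E^*], and since [psi] is
   symmetric, every product of [k] creation operators applied to [psi] is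
   [sqrt ((k+M)!/M!)] times [P (e_(i_1) (x) ... (x) e_(i_k) (x) psi)].  Hence
   [T^k(Gamma) = c P E E^* P] and [W_k(Gamma) = c Q E^* P E Q] with
   [c = (k+M)!/M!].  Permuting the first [k] factors commutes with [P], so
   [P E Q = P E], and the two operators are [X Y] and [Y X] for [X = c P E Q]
   and [Y = Q E^* P].  By Sylvester's determinant identity [X Y] and [Y X]
   have the same nonzero eigenvalues with multiplicity, and restricting to the
   symmetric subspaces does not change them, as both operators vanish on the
   orthogonal complements. *)

From Pilot Require Import Defs.
From HB Require Import structures.
From mathcomp Require Import all_boot all_order all_algebra all_fingroup.
Set Implicit Arguments. Unset Strict Implicit. Unset Printing Implicit Defensive.
Import Order.TTheory GRing.Theory Num.Theory.
Local Open Scope ring_scope.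

Lemma char_poly_mulmxC (R : comNzRingType) m n (X : 'M[R]_(m, n)) (Y : 'M[R]_(n, m)) :
  'X^n * char_poly (X *m Y) = 'X^m * char_poly (Y *m X).
Proof.
set Xp := map_mx polyC X; set Yp := map_mx polyC Y.
pose B := block_mx ('X%:M : 'M_m) Xp Yp 1%:M.
have eX : block_mx 1%:M (- Xp) 0 1%:M *m B = block_mx (char_poly_mx (X *m Y)) 0 Yp 1%:M.
  rewrite mulmx_block !mul1mx !mul0mx !add0r mulmx1 mulNmx addrN.
  by rewrite /char_poly_mx map_mxM addrC.
have eY : block_mx 1%:M 0 (- Yp) 'X%:M *m B = block_mx 'X%:M Xp 0 (char_poly_mx (Y *m X)).
  rewrite mulmx_block !mul1mx !mul0mx !addr0 mulmx1 mulNmx mul_mx_scalar mul_scalar_mx.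
  by rewrite addNr /char_poly_mx map_mxM addrC mulNmx.
move/(congr1 determinant): eX; move/(congr1 determinant): eY.
rewrite !det_mulmx !det_ublock !det_lblock !det1 !det_scalar !mul1r mulr1 /char_poly.
by move=> <- <-.
Qed.

Lemma mup_char_poly_mulmxC (R : fieldType) m n (X : 'M[R]_(m, n)) (Y : 'M[R]_(n, m)) l :
  l != 0 -> mup l (char_poly (X *m Y)) = mup l (char_poly (Y *m X)).
Proof.
move=> l_neq0; have Xn_l p : ~~ root ('X^p : {poly R}) l.
  by rewrite rootE hornerXn expf_neq0.
by rewrite -(mupMr _ (Xn_l n)) char_poly_mulmxC (mupMr _ (Xn_l m)).
Qed.

Lemma char_poly_trmx (R : comNzRingType) n (A : 'M[R]_n) : char_poly A^T = char_poly A.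
Proof.
by rewrite /char_poly -det_tr /char_poly_mx linearB /= tr_scalar_mx map_trmx trmxK.
Qed.

Lemma mup_char_poly_restrictmx (F : fieldType) n (P A : 'M[F]_n) l :
  l != 0 -> P^T = P -> P *m A = A ->
  mup l (char_poly (restrictmx P A^T)) = mup l (char_poly A).
Proof.
move=> l_neq0 symP PA; rewrite /conjmx -mulmxA mup_char_poly_mulmxC //.
have AT_P : (A^T <= row_base P)%MS by rewrite eq_row_base -PA trmx_mul symP submxMl.
by rewrite mulmxKpV // char_poly_trmx.
Qed.

Lemma mup_char_poly_restrictmx_mulmxC (F : fieldType) n m (P : 'M[F]_n) (Q : 'M[F]_m)
    (X : 'M_(n, m)) (Y : 'M_(m, n)) l :
  l != 0 -> P^T = P -> Q^T = Q -> P *m X = X -> Q *m Y = Y ->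
  mup l (char_poly (restrictmx P (X *m Y)^T)) = mup l (char_poly (restrictmx Q (Y *m X)^T)).
Proof.
move=> l_neq0 symP symQ PX QY.
by rewrite !mup_char_poly_restrictmx ?mulmxA ?PX ?QY // mup_char_poly_mulmxC.
Qed.

Lemma natr_fact_neq0 (R : numDomainType) n : (n`!)%:R != 0 :> R.
Proof. by rewrite pnatr_eq0 -lt0n fact_gt0. Qed.

Lemma perm_average_const (R : numFieldType) (V : lmodType R) n (A : 'S_n -> V) v :
  (forall s, A s = v) -> (n`!)%:R^-1 *: \sum_s A s = v.
Proof.
move=> Av; under eq_bigr do rewrite Av.
by rewrite sumr_const card_Sn -scaler_nat scalerA mulVf ?natr_fact_neq0 ?scale1r.
Qed.

Lemma mkseq_nth_size (T : Type) (x0 : T) (s : seq T) k : size s = k -> mkseq (nth x0 s) k = s.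
Proof. by move=> <-; exact: mkseq_nth. Qed.

Lemma sum_tuple0 (T : finType) (V : nmodType) (F : 0.-tuple T -> V) :
  \sum_(t : 0.-tuple T) F t = F [tuple].
Proof. by rewrite (big_pred1 [tuple]) // => t /=; rewrite [t]tuple0; apply/eqP. Qed.

Lemma sum_tuple_cons (T : finType) (V : nmodType) n (F : n.+1.-tuple T -> V) :
  \sum_(t : n.+1.-tuple T) F t =
  \sum_(a : T) \sum_(t : n.-tuple T) F (cons_tuple a t).
Proof.
rewrite pair_big /= (reindex (fun p : T * n.-tuple T => cons_tuple p.1 p.2)) //=.
exists (fun t : n.+1.-tuple T => (thead t, behead_tuple t)).
  by move=> [a t] _ /=; congr (_, _); apply: val_inj.
by move=> t _; rewrite [RHS]tuple_eta; apply: val_inj.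
Qed.

Lemma eq_cat_tuple1 n (T : eqType) (a : T) (t : n.+1.-tuple T) (u : n.-tuple T) :
  (t == cat_tuple [tuple a] u) = (thead t == a) && (u == behead_tuple t).
Proof.
by rewrite -!val_eqE /= [in LHS](tuple_eta t) /= eqseq_cons [X in _ && X]eq_sym.
Qed.

Definition perm_cat_fun k m (s : 'S_k) (t : 'S_m) (x : 'I_(k + m)) : 'I_(k + m) :=
  match split x with inl a => lshift m (s a) | inr b => rshift k (t b) end.

Lemma perm_cat_inj k m (s : 'S_k) (t : 'S_m) : injective (perm_cat_fun s t).
Proof.
move=> x y; rewrite /perm_cat_fun.
case: splitP => a ea; case: splitP => b eb /eqP; rewrite -val_eqE /=.
- by move/eqP/val_inj/perm_inj => eab; apply: ord_inj; rewrite ea eb eab.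
- by move/eqP => e; have := ltn_ord (s a); rewrite e -ltn_subRL subnn.
- by move/eqP => e; have := ltn_ord (s b); rewrite -e -ltn_subRL subnn.
- by move/eqP/addnI/val_inj/perm_inj => eab; apply: ord_inj; rewrite ea eb eab.
Qed.

Definition perm_cat k m (s : 'S_k) (t : 'S_m) : 'S_(k + m) := perm (@perm_cat_inj k m s t).

Lemma perm_cat_addn0 k (s : 'S_(k + 0)) : s = perm_cat (cast_perm (addn0 k) s) 1.
Proof.
apply/permP => x; rewrite permE /perm_cat_fun; case: splitP => [a ea|[]//].
apply: val_inj; rewrite /= cast_permE /=; congr (val (s _)); exact: val_inj.
Qed.

Section Adjoint.
Variable C : numClosedFieldType.

Lemma adjmxM m n p (A : 'M[C]_(m, n)) (B : 'M_(n, p)) : adjmx (A *m B) = adjmx B *m adjmx A.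
Proof. by rewrite /adjmx map_mxM trmx_mul. Qed.

Lemma adjmxZ m n a (A : 'M[C]_(m, n)) : adjmx (a *: A) = a^* *: adjmx A.
Proof. by rewrite /adjmx map_mxZ linearZ. Qed.

Lemma adjmx_sum m n I (r : seq I) (F : I -> 'M[C]_(m, n)) :
  adjmx (\sum_(x <- r) F x) = \sum_(x <- r) adjmx (F x).
Proof. by rewrite /adjmx map_mx_sum (raddf_sum trmx). Qed.

Lemma adjmx_trmx m n (A : 'M[C]_(m, n)) : adjmx A^T = (adjmx A)^T.
Proof. by rewrite /adjmx -map_trmx. Qed.

End Adjoint.

Section Tensors.
Variables (C : numClosedFieldType) (N : nat).
Local Notation tdim := (tdim N).
Local Notation idx := (@idx N _).
Local Notation ridx := (@ridx N _).
Local Notation Psym := (Psym (C:=C) N).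

Lemma ridxK n (t : n.-tuple 'I_N) : idx (ridx t) = t.
Proof. exact: enum_rankK. Qed.

Lemma idxK n (i : 'I_(tdim n)) : ridx (idx i) = i.
Proof. exact: enum_valK. Qed.

Lemma idx_inj n : injective (@Defs.idx N n).
Proof. exact: can_inj (@idxK n). Qed.

Lemma sum_idx_delta n (t : n.-tuple 'I_N) (f : 'I_(tdim n) -> C) :
  \sum_l (idx l == t)%:R * f l = f (ridx t).
Proof.
rewrite (bigD1 (ridx t)) //= ridxK eqxx mul1r big1 ?addr0 // => l /negPf.
by rewrite -(inj_eq (@idx_inj n)) ridxK => ->; rewrite mul0r.
Qed.

Definition tpermute n (t : n.-tuple 'I_N) (s : 'S_n) : n.-tuple 'I_N :=
  [tuple tnth t (s x) | x < n].

Lemma tpermuteM n (t : n.-tuple 'I_N) s s' :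
  tpermute (tpermute t s) s' = tpermute t (s' * s).
Proof. by apply: eq_from_tnth => x; rewrite !tnth_mktuple permM. Qed.

Lemma tpermute1 n (t : n.-tuple 'I_N) : tpermute t 1 = t.
Proof. by apply: eq_from_tnth => x; rewrite !tnth_mktuple perm1. Qed.

Lemma tpermute_eqV n (t u : n.-tuple 'I_N) s :
  (tpermute t s == u) = (tpermute u s^-1 == t).
Proof. by apply/eqP/eqP => <-; rewrite tpermuteM ?mulVg ?mulgV tpermute1. Qed.

Lemma tpermute_inj n (s : 'S_n) : injective (fun t : n.-tuple 'I_N => tpermute t s).
Proof.
by apply: (can_inj (g := fun t => tpermute t s^-1)) => t; rewrite tpermuteM mulVg tpermute1.
Qed.

Definition tpermmx n (s : 'S_n) : 'M[C]_(tdim n) :=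
  \matrix_(i, j) (tpermute (idx j) s == idx i)%:R.

Lemma tpermmxM n (s t : 'S_n) : tpermmx s *m tpermmx t = tpermmx (s * t).
Proof.
apply/matrixP => i j; rewrite !mxE.
under eq_bigr do rewrite !mxE mulrC eq_sym.
by rewrite sum_idx_delta ridxK tpermuteM.
Qed.

Lemma tpermmx1 n : tpermmx (1 : 'S_n) = 1%:M.
Proof.
by apply/matrixP => i j; rewrite !mxE tpermute1 eq_sym (inj_eq (@idx_inj n)).
Qed.

Lemma trmx_tpermmx n (s : 'S_n) : (tpermmx s)^T = tpermmx s^-1.
Proof. by apply/matrixP => i j; rewrite !mxE tpermute_eqV. Qed.

Lemma PsymE n : Psym n = (n`!)%:R^-1 *: \sum_(s : 'S_n) tpermmx s.
Proof.
apply/matrixP => i j; rewrite !mxE summxE; congr (_ * _).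
rewrite -sum1_card natr_sum big_mkcond /=; apply: eq_bigr => s _.
by rewrite !mxE inE; case: eqP.
Qed.

Lemma Psym_tpermmx n (t : 'S_n) : Psym n *m tpermmx t = Psym n.
Proof.
rewrite [X in X *m _]PsymE -scalemxAl mulmx_suml.
under eq_bigr do rewrite tpermmxM.
by rewrite [RHS]PsymE [in RHS](reindex_inj (mulIg t)).
Qed.

Lemma tpermmx_Psym n (t : 'S_n) : tpermmx t *m Psym n = Psym n.
Proof.
rewrite [X in _ *m X]PsymE -scalemxAr mulmx_sumr.
under eq_bigr do rewrite tpermmxM.
by rewrite [RHS]PsymE [in RHS](reindex_inj (mulgI t)).
Qed.

Lemma Psym_idem n : Psym n *m Psym n = Psym n.
Proof.
by rewrite {2}PsymE -scalemxAr mulmx_sumr; apply: perm_average_const => s; rewrite Psym_tpermmx.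
Qed.

Lemma trmx_Psym n : (Psym n)^T = Psym n.
Proof.
rewrite PsymE linearZ /= linear_sum /= (reindex_inj invg_inj) /=.
by under eq_bigr do rewrite trmx_tpermmx invgK.
Qed.

Lemma adjmx_Psym n : adjmx (Psym n) = Psym n.
Proof.
rewrite /adjmx -[RHS]trmx_Psym; congr (_^T).
by apply/matrixP => i j; rewrite !mxE rmorphM fmorphV /= !conjC_nat.
Qed.

Lemma Psym0 : Psym 0 = 1%:M.
Proof.
rewrite PsymE; apply: perm_average_const => s.
by rewrite -tpermmx1; congr tpermmx; apply/permP => -[].
Qed.

Definition insmx k m (i : k.-tuple 'I_N) : 'M[C]_(tdim (k + m), tdim m) :=
  \matrix_(r, c) (idx r == cat_tuple i (idx c))%:R.

Lemma tpermute_cat k m (i : k.-tuple 'I_N) (c : m.-tuple 'I_N) s t :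
  tpermute (cat_tuple i c) (perm_cat s t) = cat_tuple (tpermute i s) (tpermute c t).
Proof.
apply: eq_from_tnth => x; rewrite tnth_mktuple permE /perm_cat_fun.
case: splitP => a ea.
  by rewrite (_ : x = lshift m a) ?tnth_lshift ?tnth_mktuple //; apply: val_inj.
by rewrite (_ : x = rshift k a) ?tnth_rshift ?tnth_mktuple //; apply: val_inj.
Qed.

Lemma insmx_tpermmx k m (i : k.-tuple 'I_N) (t : 'S_m) :
  insmx m i *m tpermmx t = tpermmx (perm_cat 1 t) *m insmx m i.
Proof.
apply/matrixP => r c; rewrite !mxE.
under eq_bigr do rewrite !mxE mulrC eq_sym.
rewrite sum_idx_delta; under [RHS]eq_bigr do rewrite !mxE mulrC.
by rewrite sum_idx_delta !ridxK tpermute_cat tpermute1 eq_sym.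
Qed.

Lemma tpermmx_insmx k m (i : k.-tuple 'I_N) (s : 'S_k) :
  tpermmx (perm_cat s 1) *m insmx m i = insmx m (tpermute i s).
Proof.
apply/matrixP => r c; rewrite !mxE.
under eq_bigr do rewrite !mxE mulrC.
by rewrite sum_idx_delta !ridxK tpermute_cat tpermute1 eq_sym.
Qed.

Lemma Psym_insmx_Psym k m (i : k.-tuple 'I_N) :
  Psym (k + m) *m insmx m i *m Psym m = Psym (k + m) *m insmx m i.
Proof.
rewrite [X in _ *m X]PsymE -scalemxAr mulmx_sumr; apply: perm_average_const => t.
by rewrite -mulmxA insmx_tpermmx mulmxA Psym_tpermmx.
Qed.

Lemma Psym_insmx_tpermute k m (i : k.-tuple 'I_N) (s : 'S_k) :
  Psym (k + m) *m insmx m (tpermute i s) = Psym (k + m) *m insmx m i.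
Proof. by rewrite -tpermmx_insmx mulmxA Psym_tpermmx. Qed.

Lemma insmx_nil m : insmx m [tuple] = 1%:M.
Proof.
apply/matrixP => r c; rewrite !mxE -(inj_eq (@idx_inj m)).
by congr ((nat_of_bool _)%:R); rewrite -!val_eqE.
Qed.

Lemma insmx_cons k m (a : 'I_N) (i : k.-tuple 'I_N) :
  insmx (k + m) [tuple a] *m insmx m i = insmx m (cons_tuple a i).
Proof.
apply/matrixP => r c; rewrite !mxE.
under eq_bigr do rewrite !mxE mulrC.
by rewrite sum_idx_delta ridxK; congr ((nat_of_bool _)%:R); rewrite -!val_eqE.
Qed.

Lemma tensmx_ket n (a : 'I_N) : tensmx n (ket C a) = insmx n [tuple a].
Proof.
apply/matrixP => r c; rewrite !mxE eqxx andbT -natrM mulnb.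
by congr ((nat_of_bool _)%:R); rewrite -!val_eqE /= [in RHS](tuple_eta (idx r)) eqseq_cons.
Qed.

Lemma adjmx_insmx k m (i : k.-tuple 'I_N) : adjmx (insmx m i) = (insmx m i)^T.
Proof. by apply/matrixP => r c; rewrite !mxE conjC_nat. Qed.

Fixpoint crea_coef m k : C :=
  if k is k'.+1 then sqrtC (k' + m).+1%:R * crea_coef m k' else 1.

Lemma crea_coef_ge0 m k : 0 <= crea_coef m k.
Proof. by elim: k => //= k IH; rewrite mulr_ge0 // sqrtC_ge0 ler0n. Qed.

Lemma conj_crea_coef m k : (crea_coef m k)^* = crea_coef m k.
Proof. exact/geC0_conj/crea_coef_ge0. Qed.

Lemma crea_coef_sqr m k : crea_coef m k ^+ 2 * (m`!)%:R = ((k + m)`!)%:R.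
Proof.
elim: k => [|k IH] /=; first by rewrite expr1n mul1r.
by rewrite exprMn sqrtCK -mulrA IH -natrM addSn factS.
Qed.

Fixpoint rev_tuple (a : nat -> 'I_N) k : k.-tuple 'I_N :=
  if k is k'.+1 then cons_tuple (a k') (rev_tuple a k') else [tuple].

Lemma rev_tupleE (a : nat -> 'I_N) k : val (rev_tuple a k) = rev (mkseq a k).
Proof. by elim: k => [|k IH] //=; rewrite IH mkseqS rev_rcons. Qed.

Lemma creas_Psym M (vs : nat -> 'cV[C]_N) k (a : nat -> 'I_N) :
  (forall n, (n < k)%N -> vs n = ket C (a n)) ->
  creas M vs k *m Psym M = crea_coef M k *: (Psym (k + M) *m insmx M (rev_tuple a k)).
Proof.
elim: k => [|k IH] vs_a /=; first by rewrite mul1mx insmx_nil mulmx1 scale1r.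
rewrite -mulmxA IH => [|n /ltnW]; last exact: vs_a.
rewrite /adag vs_a // tensmx_ket -scalemxAl -scalemxAr scalerA; congr (_ *: _).
rewrite -!mulmxA (mulmxA (Psym (k + M))) Psym_idem !mulmxA.
by rewrite (@Psym_insmx_Psym 1) -mulmxA insmx_cons.
Qed.

Lemma crea_prod_rev_Psym M k (x0 : 'I_N) (i : k.-tuple 'I_N) :
  crea_prod_rev C M i *m Psym M = crea_coef M k *: (Psym (k + M) *m insmx M i).
Proof.
have i_rev n : (n < k)%N -> rkets C i n = ket C (nth x0 (rev i) n).
  by move=> lt_nk; rewrite /rkets -map_rev (nth_map x0) // size_rev size_tuple.
rewrite /crea_prod_rev (creas_Psym _ i_rev); congr (_ *: (_ *m insmx _ _)).
apply: val_inj; rewrite rev_tupleE mkseq_nth_size; first by rewrite revK.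
by rewrite size_rev size_tuple.
Qed.

Lemma tpermute_rev k (j : k.-tuple 'I_N) :
  tpermute j (perm (@rev_ord_inj k)) = [tuple of rev j].
Proof.
apply: eq_from_tnth => x; have x0 := tnth j x.
by rewrite tnth_mktuple permE !(tnth_nth x0) /= nth_rev ?size_tuple.
Qed.

Lemma crea_prod_Psym M k (x0 : 'I_N) (j : k.-tuple 'I_N) :
  crea_prod C M j *m Psym M = crea_coef M k *: (Psym (k + M) *m insmx M j).
Proof.
have j_nth n : (n < k)%N -> kets C j n = ket C (nth x0 j n).
  by move=> lt_nk; rewrite /kets (nth_map x0) // size_tuple.
rewrite /crea_prod (creas_Psym _ j_nth).
rewrite -[in RHS](@Psym_insmx_tpermute k M j (perm (@rev_ord_inj k))).
congr (_ *: (_ *m insmx _ _)); apply: val_inj.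
by rewrite tpermute_rev rev_tupleE mkseq_nth_size // size_tuple.
Qed.

Lemma insmx1_mulmxE n (a : 'I_N) m (B : 'M[C]_(tdim n, m)) r j :
  (insmx n [tuple a] *m B) r j =
  (thead (idx r) == a)%:R * B (ridx (behead_tuple (idx r))) j.
Proof.
rewrite mxE; under eq_bigr do rewrite mxE eq_cat_tuple1 -mulnb natrM -mulrA.
by rewrite -mulr_sumr sum_idx_delta.
Qed.

Lemma idop_sum n (A : 'M[C]_(tdim n)) :
  idop A = \sum_(a : 'I_N) insmx n [tuple a] *m A *m (insmx n [tuple a])^T.
Proof.
apply/matrixP => r s; rewrite !mxE summxE.
under eq_bigr do rewrite -mulmxA insmx1_mulmxE -[A *m _]trmxK trmx_mul trmxK
  mxE insmx1_mulmxE mxE mulrA.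
rewrite (bigD1 (thead (idx r))) //= big1 ?addr0 => [|a /negPf a_r]; last first.
  by rewrite eq_sym a_r !mul0r.
by rewrite eqxx mul1r eq_sym.
Qed.

Lemma idkE M k (A : 'M[C]_(tdim M)) :
  idk k A = \sum_(i : k.-tuple 'I_N) insmx M i *m A *m (insmx M i)^T.
Proof.
elim: k => [|k IH] /=; first by rewrite sum_tuple0 insmx_nil trmx1 mulmx1 mul1mx.
rewrite IH idop_sum sum_tuple_cons; apply: eq_bigr => a _.
rewrite mulmx_sumr mulmx_suml; apply: eq_bigr => i _.
by rewrite -(@insmx_cons k M a i) trmx_mul !mulmxA.
Qed.

Lemma tdim0_eq (x y : 'I_(tdim 0)) : x = y.
Proof. by apply: (@idx_inj 0); rewrite (tuple0 (idx x)) (tuple0 (idx y)). Qed.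

(* The unit vector of the one-dimensional space [H_0 = C]. *)
Definition vac : 'cV[C]_(tdim 0) := const_mx 1.

Lemma vac_mul_tr : vac *m vac^T = 1%:M.
Proof. by apply/matrixP => x y; rewrite !mxE big_ord1 !mxE mulr1 (tdim0_eq x y) eqxx. Qed.

Lemma tr_vac_mul : vac^T *m vac = 1%:M.
Proof.
apply/matrixP => x y; rewrite !mxE !ord1 eqxx.
under eq_bigr do rewrite !mxE mulr1.
by rewrite sumr_const card_ord /Defs.tdim card_tuple expn0.
Qed.

Definition basis_ket k (i : k.-tuple 'I_N) : 'cV[C]_(tdim (k + 0)) := insmx 0 i *m vac.

Lemma tr_basis_ket_mul k (i j : k.-tuple 'I_N) :
  (basis_ket i)^T *m basis_ket j = (i == j)%:R%:M.
Proof.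
have ins_ij : (insmx 0 i)^T *m insmx 0 j = (i == j)%:R%:M.
  apply/matrixP => x y; rewrite !mxE (tdim0_eq x y) eqxx mulr1n.
  under eq_bigr do rewrite !mxE.
  rewrite sum_idx_delta ridxK eq_sym; congr ((nat_of_bool _)%:R).
  by rewrite -!val_eqE /= !tuple0 /= !cats0.
by rewrite trmx_mul mulmxA -(mulmxA vac^T) ins_ij mul_mx_scalar -scalemxAl tr_vac_mul scalemx1.
Qed.

Lemma adjmx_basis_ket k (i : k.-tuple 'I_N) : adjmx (basis_ket i) = (basis_ket i)^T.
Proof. by rewrite /basis_ket adjmxM adjmx_insmx /adjmx map_const_mx rmorph1 trmx_mul. Qed.

Lemma basis_ket_tpermmx k (i : k.-tuple 'I_N) (t : 'S_k) :
  tpermmx (perm_cat t 1) *m basis_ket i = basis_ket (tpermute i t).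
Proof. by rewrite /basis_ket mulmxA tpermmx_insmx. Qed.

Lemma crea_prod_rev0_mul_adj k (x0 : 'I_N) (i j : k.-tuple 'I_N) :
  crea_prod_rev C 0 i *m adjmx (crea_prod_rev C 0 j) =
  crea_coef 0 k ^+ 2 *: (Psym (k + 0) *m basis_ket i *m (basis_ket j)^T *m Psym (k + 0)).
Proof.
have crea0 l : crea_prod_rev C 0 l = crea_coef 0 k *: (Psym (k + 0) *m insmx 0 l).
  by rewrite -[LHS]mulmx1 -Psym0 (crea_prod_rev_Psym _ x0).
rewrite !crea0 adjmxZ conj_crea_coef adjmxM adjmx_Psym adjmx_insmx.
rewrite -scalemxAl -scalemxAr scalerA expr2 /basis_ket trmx_mul !mulmxA.
by rewrite -(mulmxA _ vac) vac_mul_tr mulmx1.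
Qed.

Section SymmetricState.
Variables (M k : nat) (psi : 'cV[C]_(tdim M)).
Hypothesis Psym_psi : Psym M *m psi = psi.
Variable x0 : 'I_N.

Local Notation P := (Psym (k + M)).
Local Notation Q := (Psym (k + 0)).
Local Notation Gamma := (psi *m adjmx psi).

Definition ins_psi (i : k.-tuple 'I_N) : 'cV[C]_(tdim (k + M)) := insmx M i *m psi.

(* The operator [phi |-> phi (x) psi] from [(C^N)^{(x) k}] to [(C^N)^{(x) k+M}]. *)
Definition tens_psi : 'M[C]_(tdim (k + M), tdim (k + 0)) :=
  \sum_i ins_psi i *m (basis_ket i)^T.

Lemma adjmx_tens_psi : adjmx tens_psi = \sum_i basis_ket i *m adjmx (ins_psi i).
Proof.
rewrite adjmx_sum; apply: eq_bigr => i _.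
by rewrite adjmxM adjmx_trmx adjmx_basis_ket trmxK.
Qed.

Lemma tens_psi_mul_adj : tens_psi *m adjmx tens_psi = \sum_i ins_psi i *m adjmx (ins_psi i).
Proof.
rewrite adjmx_tens_psi mulmx_suml; apply: eq_bigr => i _.
rewrite mulmx_sumr (bigD1 i) //= big1 => [|j /negPf ij]; rewrite mulmxA -(mulmxA (ins_psi i)).
  by rewrite tr_basis_ket_mul eqxx mulmx1 addr0.
by rewrite tr_basis_ket_mul eq_sym ij mul_mx_scalar scale0r mul0mx.
Qed.

Lemma TkE :
  Tk M k Gamma = ((k + M)`!)%:R / (M`!)%:R *: (P *m tens_psi *m adjmx tens_psi *m P).
Proof.
rewrite /Tk -(mulmxA P tens_psi) tens_psi_mul_adj idkE; congr (_ *: (_ *m _ *m _)).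
by apply: eq_bigr => i _; rewrite adjmxM adjmx_insmx !mulmxA.
Qed.

Lemma trace_Gamma_crea (i j : k.-tuple 'I_N) :
  \tr (Gamma *m (adjmx (crea_prod_rev C M i) *m crea_prod C M j)) =
  crea_coef M k ^+ 2 * (adjmx (ins_psi i) *m P *m ins_psi j) 0 0.
Proof.
have crea_rev_psi : crea_prod_rev C M i *m psi = crea_coef M k *: (P *m ins_psi i).
  by rewrite -{1}Psym_psi mulmxA (crea_prod_rev_Psym _ x0) -scalemxAl -mulmxA.
have crea_psi : crea_prod C M j *m psi = crea_coef M k *: (P *m ins_psi j).
  by rewrite -{1}Psym_psi mulmxA (crea_prod_Psym _ x0) -scalemxAl -mulmxA.
rewrite -mulmxA mxtrace_mulC.
have -> : adjmx psi *m (adjmx (crea_prod_rev C M i) *m crea_prod C M j) *m psi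
    = adjmx (crea_prod_rev C M i *m psi) *m (crea_prod C M j *m psi).
  by rewrite adjmxM !mulmxA.
rewrite crea_psi crea_rev_psi /mxtrace big_ord1 adjmxZ conj_crea_coef adjmxM adjmx_Psym.
by rewrite -scalemxAl -scalemxAr scalerA mxE expr2 !mulmxA -(mulmxA _ P P) Psym_idem.
Qed.

Lemma adj_tens_psi_expand :
  Q *m adjmx tens_psi *m P *m tens_psi *m Q =
  \sum_i \sum_j (adjmx (ins_psi i) *m P *m ins_psi j) 0 0 *:
    (Q *m basis_ket i *m (basis_ket j)^T *m Q).
Proof.
rewrite adjmx_tens_psi /tens_psi mulmx_sumr !mulmx_suml [RHS]exchange_big.
apply: eq_bigr => j _; rewrite mulmx_sumr !mulmx_suml; apply: eq_bigr => i _.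
have -> : Q *m (basis_ket i *m adjmx (ins_psi i)) *m P *m (ins_psi j *m (basis_ket j)^T) *m Q
    = Q *m basis_ket i *m (adjmx (ins_psi i) *m P *m ins_psi j) *m (basis_ket j)^T *m Q.
  by rewrite !mulmxA.
by rewrite [X in _ *m X *m _ *m _]mx11_scalar mul_mx_scalar -!scalemxAl.
Qed.

Lemma WkE :
  Wk M k Gamma = ((k + M)`!)%:R / (M`!)%:R *: (Q *m adjmx tens_psi *m P *m tens_psi *m Q).
Proof.
rewrite adj_tens_psi_expand /Wk.
under eq_bigr do under eq_bigr do
  rewrite trace_Gamma_crea (crea_prod_rev0_mul_adj x0) scalerA mulrAC -scalerA.
under eq_bigr do rewrite -scaler_sumr.
rewrite -scaler_sumr scalerA; congr (_ *: _).
have := crea_coef_sqr 0 k; rewrite fact0 mulr1 addn0 => ->.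
have := crea_coef_sqr M k => <-.
by rewrite mulfK ?natr_fact_neq0 // mulrCA mulVf ?mulr1 ?natr_fact_neq0.
Qed.

Lemma Psym_tens_psi_tpermmx (s : 'S_(k + 0)) : P *m tens_psi *m tpermmx s = P *m tens_psi.
Proof.
have [t st] : exists t : 'S_k, (s^-1)%g = perm_cat t 1.
  by exists (cast_perm (addn0 k) s^-1)%g; exact: perm_cat_addn0.
have permute_term i :
    ins_psi i *m (basis_ket i)^T *m tpermmx s = ins_psi i *m (basis_ket (tpermute i t))^T.
  by rewrite -mulmxA -[tpermmx s]trmxK -trmx_mul trmx_tpermmx st basis_ket_tpermmx.
rewrite /tens_psi mulmx_sumr mulmx_suml; under eq_bigr do rewrite -mulmxA permute_term.
rewrite (reindex_inj (@tpermute_inj k t^-1%g)) /=; apply: eq_bigr => i _.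
by rewrite tpermuteM mulgV tpermute1 /ins_psi !mulmxA Psym_insmx_tpermute.
Qed.

Lemma Psym_tens_psi_Psym : P *m tens_psi *m Q = P *m tens_psi.
Proof.
rewrite [X in _ *m X]PsymE -scalemxAr mulmx_sumr; apply: perm_average_const => s.
exact: Psym_tens_psi_tpermmx.
Qed.

Lemma eigmult_Tk_Wk l :
  l != 0 -> eigmult (k + M) (Tk M k Gamma) l = eigmult (k + 0) (Wk M k Gamma) l.
Proof.
move=> l_neq0; set c : C := ((k + M)`!)%:R / (M`!)%:R.
pose X := c *: (P *m tens_psi *m Q); pose Y := Q *m adjmx tens_psi *m P.
have QEP : Q *m adjmx tens_psi *m P = adjmx tens_psi *m P.
  have := congr1 adjmx Psym_tens_psi_Psym; rewrite !adjmxM !adjmx_Psym => adjPEQ.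
  by rewrite -mulmxA adjPEQ.
have -> : Tk M k Gamma = X *m Y.
  by rewrite TkE -scalemxAl /Y QEP Psym_tens_psi_Psym !mulmxA.
have -> : Wk M k Gamma = Y *m X.
  by rewrite WkE -scalemxAr /Y !mulmxA -(mulmxA _ P P) Psym_idem.
apply: mup_char_poly_restrictmx_mulmxC; rewrite ?trmx_Psym //.
  by rewrite /X -scalemxAr !mulmxA Psym_idem.
by rewrite /Y !mulmxA Psym_idem.
Qed.

End SymmetricState.
End Tensors.

Theorem mainTheorem4 (C : numClosedFieldType) (N M k : nat)
  (HN : (2 <= N)%N) (HM : (1 <= M)%N)
  (psi : 'cV[C]_(tdim N M)) (Hpsi : Psym N M *m psi = psi) :
  let Gamma := psi *m adjmx psi in
  forall lambda : C, lambda != 0 ->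
    eigmult (k + M) (Tk M k Gamma) lambda = eigmult (k + 0) (Wk M k Gamma) lambda.
Proof.
(* Only [0 < N] is used, to supply a default index. *)
have x0 : 'I_N := Ordinal (leq_trans (isT : (0 < 2)%N) HN).
exact: eigmult_Tk_Wk Hpsi x0.
Qed.
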